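(* Let $t\ge 2$ and let $(Q,B)$ be a Steiner system $S(t,k,m)$. Then its incidence matrix is $\lceil k/(t-1)\rceil$-decodable. Moreover, for every integer $n\ge 1$, $$m^*(n,3,3)\le \left\lceil\frac{1+\sqrt{1+24n}}{2}\right\rceil+3.$$
   Context: A Steiner system $S(t,k,m)$ is a pair $(Q,B)$ where $Q$ is a set of $m$ points and $B$ is a collection of $k$-subsets (blocks) of $Q$ such that every $t$-subset of $Q$ is contained in exactly one block. Its incidence matrix is the $|Q|\times|B|$ binary matrix whose $(i,j)$ entry is $1$ iff the $i$-th point lies in the $j$-th block. For a binary matrix $M$ and a nonempty set $S$ of its columns, $S$ is a stopping set if the submatrix formed by $S$ has no row with exactly one $1$; $s(M)$ is the minimum size of a stopping set ($+\infty$ if none). $M$ is $d$-decodable if $s(M)\ge d+1$, and $(d,k)$-decodable if moreover every column has exactly $k$ ones; $m^*(n,d,k)$ is the minimum $m$ such that an $m\times n$ $(d,k)$-decodable matrix exists. *)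

From HB Require Import structures.
From mathcomp Require Import all_boot all_order all_algebra.
From mathcomp Require Import reals.
Set Implicit Arguments. Unset Strict Implicit. Unset Printing Implicit Defensive.
Import Order.TTheory GRing.Theory Num.Theory.

Definition stopping_set (m n : nat) (M : 'M[bool]_(m, n)) (S : {set 'I_n}) : Prop :=
  S != set0 /\ forall i : 'I_m, #|[set j in S | M i j]| != 1%N.

(* M is d-decodable iff s(M) >= d+1, where s(M) is the minimum size of a
   stopping set (+oo if there is none): i.e. every stopping set has size > d. *)
Definition decodable (d m n : nat) (M : 'M[bool]_(m, n)) : Prop :=
  forall S : {set 'I_n}, stopping_set M S -> (d < #|S|)%N.

Definition dk_decodable (d k m n : nat) (M : 'M[bool]_(m, n)) : Prop :=
  decodable d M /\ forall j : 'I_n, #|[set i | M i j]| = k.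

Definition steiner_system (t k m : nat) (B : {set {set 'I_m}}) : Prop :=
  (forall b, b \in B -> #|b| = k) /\
  (forall T : {set 'I_m}, #|T| = t -> exists! b, b \in B /\ T \subset b).

Definition incidence_matrix (m : nat) (B : {set {set 'I_m}}) : 'M[bool]_(m, #|B|) :=
  \matrix_(i < m, j < #|B|) (i \in (enum_val j : {set 'I_m})).

Definition ceil_div (a b : nat) : nat := ((a + b.-1) %/ b)%N.

(* If every column of a binary matrix has at least k ones and two distinct
   columns share at most u ones, then every one of a column j of a stopping set
   S is shared with another column of S, so k <= (#|S| - 1) u, i.e.
   #|S| > ceil(k / u).  Two blocks of an S(t, k, m) share at most t - 1 points,
   which gives the first claim.  For the second, the zero-sum triples
   {x, y, -(x + y)} of distinct elements of Z/(N + 3) are 3-sets meeting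
   pairwise in at most one point; there are at least (N + 3) N / 6 of them,
   hence at least n when N = ceil((1 + sqrt(1 + 24 n)) / 2), as then
   N (N - 1) >= 6 n. *)

From mathcomp Require Import all_boot all_order all_algebra.
From mathcomp Require Import reals zify lra.
Import Order.TTheory GRing.Theory Num.Theory.

Set Implicit Arguments.
Unset Strict Implicit.
Unset Printing Implicit Defensive.

Lemma card_bigcup_leq (T I : finType) (P : pred I) (A : I -> {set T}) (c : nat) :
  (forall i, P i -> #|A i| <= c) -> #|\bigcup_(i | P i) A i| <= \sum_(i | P i) c.
Proof.
move=> leAc; apply: (big_ind2 (fun (X : {set T}) y => #|X| <= y)) => //.
- by rewrite cards0.
- move=> X1 X2 y1 y2 le1 le2.
  exact: leq_trans (leq_card_setU _ _) (leq_add le1 le2).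
Qed.

Lemma exists_subset_card (T : finType) (A : {set T}) (n : nat) :
  n <= #|A| -> exists2 B : {set T}, B \subset A & #|B| = n.
Proof.
elim: n => [|n IHn] ltnA; first by exists set0; rewrite ?sub0set ?cards0.
have [B BA cardB] := IHn (ltnW ltnA).
have /set0Pn[x] : A :\: B != set0.
  by rewrite -card_gt0 cardsD (setIidPr BA) cardB subn_gt0.
rewrite inE => /andP[xNB xA].
by exists (x |: B); rewrite ?subUset ?sub1set ?xA ?BA // cardsU1 xNB cardB.
Qed.

Section Decodability.
Variables (m n : nat) (M : 'M[bool]_(m, n)).

Lemma stopping_set_cover (S : {set 'I_n}) (j : 'I_n) : stopping_set M S -> j \in S ->
  [set i | M i j] \subset \bigcup_(j' in S :\ j) [set i | M i j && M i j'].
Proof.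
move=> [_ noRow1] jS; apply/subsetP => i; rewrite inE => Mij.
have jSi : j \in [set j0 in S | M i j0] by rewrite inE jS Mij.
have /set0Pn[j'] : [set j0 in S | M i j0] :\ j != set0.
  by rewrite -card_gt0; move: (noRow1 i); rewrite (cardsD1 j) jSi; case: #|_|.
rewrite !inE => /and3P[j'j j'S Mij'].
by apply/bigcupP; exists j'; rewrite !inE ?j'j ?j'S ?Mij ?Mij'.
Qed.

Lemma decodable_ceil_div (k u : nat) : 0 < u ->
  (forall j, k <= #|[set i | M i j]|) ->
  (forall j j', j != j' -> #|[set i | M i j && M i j']| <= u) ->
  decodable (ceil_div k u) M.
Proof.
move=> u_gt0 col_ge meet_le S stopS.
have /set0Pn[j jS] := stopS.1.
have k_le : k <= #|S :\ j| * u.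
  apply: leq_trans (col_ge j) _.
  apply: leq_trans (subset_leq_card (stopping_set_cover stopS jS)) _.
  rewrite -sum_nat_const; apply: card_bigcup_leq => j'.
  by rewrite !inE => /andP[j'j _]; apply: meet_le; rewrite eq_sym.
by rewrite /ceil_div (cardsD1 j S) jS ltn_divLR //; lia.
Qed.

End Decodability.

Definition set_incidence_mx (m n : nat) (F : 'I_n -> {set 'I_m}) : 'M[bool]_(m, n) :=
  \matrix_(i, j) (i \in F j).

Lemma set_incidence_mx_col (m n : nat) (F : 'I_n -> {set 'I_m}) (j : 'I_n) :
  [set i | set_incidence_mx F i j] = F j.
Proof. by apply/setP => i; rewrite inE mxE. Qed.

Lemma decodable_set_incidence_mx (m n k u : nat) (F : 'I_n -> {set 'I_m}) :
  0 < u -> (forall j, k <= #|F j|) ->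
  (forall j j', j != j' -> #|F j :&: F j'| <= u) ->
  decodable (ceil_div k u) (set_incidence_mx F).
Proof.
move=> u_gt0 col_ge meet_le; apply: decodable_ceil_div => // [j|j j' jj'].
  by rewrite set_incidence_mx_col.
have -> : [set i | set_incidence_mx F i j && set_incidence_mx F i j'] = F j :&: F j'.
  by apply/setP => i; rewrite !inE !mxE.
exact: meet_le.
Qed.

Lemma steiner_blocks_meet_lt (t k m : nat) (B : {set {set 'I_m}}) (b1 b2 : {set 'I_m}) :
  steiner_system t k B -> b1 \in B -> b2 \in B -> b1 != b2 -> #|b1 :&: b2| < t.
Proof.
move=> [_ unique_block] b1B b2B; apply: contraNT; rewrite -leqNgt => t_le.
have [T Tb12 cardT] := exists_subset_card t_le.
have [b [_ b_unique]] := unique_block T cardT.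
have Tb : forall b', b' \in B -> b1 :&: b2 \subset b' -> b = b'.
  by move=> b' b'B /(subset_trans Tb12) Tb'; apply: b_unique.
by rewrite -(Tb b1) ?(Tb b2) ?subsetIl ?subsetIr.
Qed.

Lemma steiner_incidence_decodable (t k m : nat) (B : {set {set 'I_m}}) :
  1 < t -> steiner_system t k B -> decodable (ceil_div k t.-1) (incidence_matrix B).
Proof.
move=> t_gt1 steinerB.
apply: (@decodable_set_incidence_mx _ _ _ _ (@enum_val _ (mem B))) => [|j|j j' jj'].
- by rewrite ltn_predRL.
- by rewrite steinerB.1 ?enum_valP.
- rewrite -ltnS (ltn_predK t_gt1).
  apply: steiner_blocks_meet_lt steinerB _ _ _; rewrite ?enum_valP //.
  by apply: contra_neq jj' => /enum_val_inj.
Qed.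

Lemma dk_decodable_of_family (m n k u : nat) (F : {set {set 'I_m}}) :
  0 < u -> n <= #|F| -> (forall b, b \in F -> #|b| = k) ->
  (forall b1 b2, b1 \in F -> b2 \in F -> b1 != b2 -> #|b1 :&: b2| <= u) ->
  exists M : 'M[bool]_(m, n), dk_decodable (ceil_div k u) k M.
Proof.
move=> u_gt0 n_le cardF meetF.
pose col (j : 'I_n) := enum_val (widen_ord n_le j).
have colF j : col j \in F by apply: enum_valP.
exists (set_incidence_mx col); split => [|j].
  apply: decodable_set_incidence_mx => // [j|j j' jj']; first by rewrite cardF.
  apply: meetF; rewrite ?colF //; apply: contra_neq jj'.
  by rewrite /col => /enum_val_inj[] /val_inj.
by rewrite set_incidence_mx_col cardF.
Qed.

Section ZeroSumTriples.
Local Open Scope ring_scope.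
Variable V : finZmodType.

Definition zero_sum_triple (p : V * V) : {set V} := [set p.1; p.2; - (p.1 + p.2)].

Definition zero_sum_pairs : {set V * V} :=
  [set p | [&& p.1 != p.2, - (p.1 + p.2) != p.1 & - (p.1 + p.2) != p.2]].

Definition zero_sum_triples : {set {set V}} := zero_sum_triple @: zero_sum_pairs.

Lemma zero_sum_tripleE (x y a b : V) :
  a \in zero_sum_triple (x, y) -> b \in zero_sum_triple (x, y) -> a != b ->
  zero_sum_triple (x, y) = zero_sum_triple (a, b).
Proof.
have zxy : - (x + - (x + y)) = y by rewrite opprD opprK addKr.
have zyx : - (y + - (x + y)) = x by rewrite (addrC x) opprD opprK addKr.
rewrite /zero_sum_triple /= !inE => aT bT.
case/orP: aT => [/orP[] /eqP ->|/eqP ->]; case/orP: bT => [/orP[] /eqP ->|/eqP ->];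
  rewrite ?eqxx // ?(addrC (- _)) ?zxy ?zyx ?(addrC y x) => _;
  apply/setP => i; rewrite !inE; by case: (i == x); case: (i == y); case: (i == - (x + y)).
Qed.

Lemma card_zero_sum_triple (p : V * V) : p \in zero_sum_pairs ->
  #|zero_sum_triple p| = 3%N.
Proof.
rewrite inE => /and3P[p12 p31 p32].
rewrite /zero_sum_triple setUC !cardsU1 cards1 !inE.
by rewrite (negbTE p12) (negbTE p31) (negbTE p32).
Qed.

Lemma card_zero_sum_triples_meet (T1 T2 : {set V}) :
  T1 \in zero_sum_triples -> T2 \in zero_sum_triples -> T1 != T2 -> (#|T1 :&: T2| <= 1)%N.
Proof.
move=> /imsetP[[x1 y1] _ ->] /imsetP[[x2 y2] _ ->]; apply: contraNT.
rewrite -ltnNge => /card_gt1P[a [b [/setIP[a1 a2] /setIP[b1 b2] ab]]].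
by rewrite (zero_sum_tripleE a1 b1 ab) (zero_sum_tripleE a2 b2 ab).
Qed.

Lemma card_zero_sum_triple_fiber (T : {set V}) : T \in zero_sum_triples ->
  (#|[set p in zero_sum_pairs | zero_sum_triple p == T]| <= 6)%N.
Proof.
case/imsetP=> [[x y] _ ->]; set z := - (x + y).
pose perms := [:: (x, y); (y, x); (x, z); (z, x); (y, z); (z, y)].
apply: leq_trans (card_size perms); apply: subset_leq_card; apply/subsetP => -[a b].
rewrite !inE => /andP[/and3P[ab _ _] /eqP Tab].
have aT : a \in zero_sum_triple (x, y) by rewrite -Tab !inE eqxx.
have bT : b \in zero_sum_triple (x, y) by rewrite -Tab !inE eqxx orbT.
move: aT bT ab; rewrite !inE -/z.
by move=> /orP[/orP[] /eqP ->|/eqP ->] /orP[/orP[] /eqP ->|/eqP ->]; rewrite ?eqxx ?orbT.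
Qed.

Lemma card_zero_sum_pairs_le : (#|zero_sum_pairs| <= 6 * #|zero_sum_triples|)%N.
Proof.
rewrite -sum1_card (partition_big zero_sum_triple (mem zero_sum_triples)) /=;
  last by move=> p pP; apply: imset_f.
rewrite mulnC -sum_nat_const; apply: leq_sum => T TT; rewrite sum1_card.
apply: leq_trans (card_zero_sum_triple_fiber TT).
by apply: subset_leq_card; apply/subsetP => p; rewrite inE.
Qed.

(* A pair outside [zero_sum_pairs] is (x, x), (x, -(x + x)) or (-(y + y), y). *)
Lemma card_zero_sum_pairs_ge : (#|V| * (#|V| - 3) <= #|zero_sum_pairs|)%N.
Proof.
pose diag := [set (x, x) | x : V].
pose left2 := [set (x, - (x + x)) | x : V].
pose right2 := [set (- (y + y), y) | y : V].
have bad_sub : ~: zero_sum_pairs \subset diag :|: left2 :|: right2.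
  apply/subsetP => -[x y]; rewrite !inE /= !negb_and !negbK.
  case/or3P=> /eqP e; apply/orP.
  - by left; apply/orP; left; rewrite e; apply: imset_f.
  - left; apply/orP; right; apply/imsetP; exists x => //.
    by congr (_, _); rewrite -{2}e opprD opprK addKr.
  - right; apply/imsetP; exists y => //.
    by congr (_, _); rewrite -{1}e opprD opprK addrK.
have card_bad : (#|~: zero_sum_pairs| <= #|V| * 3)%N.
  apply: leq_trans (subset_leq_card bad_sub) _; rewrite 2!mulnS muln1 addnA.
  apply: leq_trans (leq_card_setU _ _) (leq_add _ (leq_imset_card _ _)).
  exact: leq_trans (leq_card_setU _ _) (leq_add (leq_imset_card _ _) (leq_imset_card _ _)).
rewrite mulnBr -(addnK #|~: zero_sum_pairs| #|zero_sum_pairs|) cardsC card_prod.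
exact: leq_sub2l.
Qed.

End ZeroSumTriples.

(* [(1 + s) / 2 <= c] and [s ^ 2 = 1 + 24 n] give [1 + 24 n <= (2 c - 1) ^ 2]. *)
Lemma ceil_sqrt_bound (R : realType) (n : nat) : exists N : nat,
  (N%:Z = Num.ceil ((1 + Num.sqrt (1 + 24 * (n%:R : R))) / 2))%R /\ 6 * n + N <= N * N.
Proof.
set s := Num.sqrt _; set c := Num.ceil _.
have s_ge0 : (0 <= s)%R by rewrite sqrtr_ge0.
have s2 : (s ^+ 2 = 1 + 24 * (n%:R : R))%R by rewrite sqr_sqrtr ?addr_ge0 ?mulr_ge0.
have c_ge : ((1 + s) / 2 <= (c%:~R : R))%R by apply: ceil_ge.
have c_ge0 : (0 <= c)%R by rewrite -(ler_int R); lra.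
exists `|c|%N; rewrite gez0_abs //; split=> //.
rewrite -lez_nat PoszD !PoszM gez0_abs // -(ler_int R) !rmorphD !rmorphM /=.
rewrite -!pmulrn; nra.
Qed.

Theorem corollary4p5 (R : realType) :
  (forall (t k m : nat) (B : {set {set 'I_m}}),
      (2 <= t)%N -> steiner_system t k B ->
      decodable (ceil_div k t.-1) (incidence_matrix B)) /\
  (forall n : nat, (1 <= n)%N ->
      exists m : nat,
        ((m%:Z <= Num.ceil ((1 + Num.sqrt (1 + 24 * (n%:R : R))) / 2) + 3)%R)
        /\ exists M : 'M[bool]_(m, n), dk_decodable 3 3 M).
Proof.
split=> [t k m B|n _]; first exact: steiner_incidence_decodable.
have [N [eN le6n]] := ceil_sqrt_bound R n.
exists N.+3; split; first by rewrite -eN -addn3.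
have enough_triples : n <= #|zero_sum_triples 'I_N.+3|.
  rewrite -(leq_pmul2l (isT : 0 < 6)); apply: leq_trans (card_zero_sum_pairs_le _).
  apply: leq_trans (card_zero_sum_pairs_ge _); rewrite card_ord /=; nia.
apply: (dk_decodable_of_family (k := 3) (u := 1) isT enough_triples) => [T|T1 T2].
  by case/imsetP=> p pP ->; apply: card_zero_sum_triple.
exact: card_zero_sum_triples_meet.
Qed.
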